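(* Let $d \geq 2$ and let $\hat{\mathbf{\Sigma}}_1,\ldots,\hat{\mathbf{\Sigma}}_K \in \mathbb{R}^{d\times d}$ be symmetric positive semi-definite matrices such that \[ \lambda_1(\hat{\mathbf{\Sigma}}_j) \geq \frac{\sum_{k=1}^K\sum_{i=2}^d \lambda_i(\hat{\mathbf{\Sigma}}_k)}{K(d-1)} \quad \text{for all } j\in\{1,\ldots,K\}. \] Then a solution of \[ \min_{\hat{\mathbf{x}}_1,\ldots,\hat{\mathbf{x}}_K \in \mathbb{R}^d,\ \hat{\sigma}^2} \ \sum_{k=1}^K \big\|\hat{\mathbf{\Sigma}}_k - (\hat{\mathbf{x}}_k\hat{\mathbf{x}}_k^\mathrm{T} + \hat{\sigma}^2 \mathbf{I})\big\|_\mathrm{F}^2 \] is given by \[ \sigma^2_{\mathrm{GMM}} = \frac{1}{K}\sum_{k=1}^K \frac{\mathrm{tr}(\hat{\mathbf{\Sigma}}_k) - \lambda_1(\hat{\mathbf{\Sigma}}_k)}{d-1},\qquad \mathbf{x}_{\mathrm{GMM},k} = \sqrt{\lambda_1(\hat{\mathbf{\Sigma}}_k) - \sigma^2_{\mathrm{GMM}}}\ \mathbf{v}_1(\hat{\mathbf{\Sigma}}_k)\quad (k=1,\ldots,K), \] where $\mathbf{v}_1(\hat{\mathbf{\Sigma}}_k)$ is a unit eigenvector associated with $\lambda_1(\hat{\mathbf{\Sigma}}_k)$.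
   Context: $\lambda_i(\mathbf{M})$ denotes the $i$-th largest eigenvalue of a symmetric positive semi-definite matrix $\mathbf{M}$ (equal to its $i$-th largest singular value); $\mathbf{I}$ is the $d\times d$ identity; $\|\cdot\|_\mathrm{F}$ is the Frobenius norm. *)

From HB Require Import structures.
From mathcomp Require Import all_boot all_order all_algebra.
From mathcomp Require Import reals.
From mathcomp Require Import polyrcf.
Set Implicit Arguments. Unset Strict Implicit. Unset Printing Implicit Defensive.
Import Order.TTheory GRing.Theory Num.Theory.
Local Open Scope ring_scope.

(* For a symmetric matrix
   all eigenvalues are real, so this list has size d. *)
Definition eigs (R : realType) (d : nat) (A : 'M[R]_d) : seq R :=
  let p := char_poly A in
  sort (fun x y : R => y <= x) (flatten [seq nseq (mup x p) x | x <- rootsR p]).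

(* lambda_i(A), 1-indexed: the i-th largest eigenvalue. *)
Definition lambda (R : realType) (d : nat) (A : 'M[R]_d) (i : nat) : R :=
  nth 0 (eigs A) i.-1.

Definition sym_mx (R : realType) (d : nat) (A : 'M[R]_d) : Prop :=
  A^T = A.

Definition psd (R : realType) (d : nat) (A : 'M[R]_d) : Prop :=
  forall x : 'cV[R]_d, 0 <= (x^T *m A *m x) 0 0.

Definition frob2 (R : realType) (m n : nat) (A : 'M[R]_(m, n)) : R :=
  \sum_(i < m) \sum_(j < n) A i j ^+ 2.

Definition norm2 (R : realType) (d : nat) (v : 'cV[R]_d) : R :=
  \sum_(i < d) v i 0 ^+ 2.

Definition gmm_obj (R : realType) (d K : nat) (S : 'I_K -> 'M[R]_d)
    (x : 'I_K -> 'cV[R]_d) (s : R) : R :=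
  \sum_(k < K) frob2 (S k - (x k *m (x k)^T + s%:M)).

From HB Require Import structures.
From mathcomp Require Import all_boot all_order all_algebra.
From mathcomp Require Import reals.
From mathcomp Require Import polyrcf.
From mathcomp Require Import complex spectral sesquilinear ring lra.
Import Order.TTheory GRing.Theory Num.Theory.
Set Implicit Arguments. Unset Strict Implicit. Unset Printing Implicit Defensive.
Local Open Scope ring_scope.

(** For a fixed [s], expanding the Frobenius norm gives
    [frob2 (B - (x x^T + s I))
       = frob2 B - 2 x^T B x + |x|^4 - 2 s (tr B - |x|^2) + d s^2].
    The Rayleigh bound [x^T B x <= lambda_1(B) |x|^2] and completing the
    square in [|x|^2] bound this below by
    [frob2 B - (lambda_1(B) - s)^2 - 2 s tr B + d s^2], with equality at
    [x = sqrt (lambda_1(B) - s) v_1] as soon as [s <= lambda_1(B)].  Summed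
    over [k], these lower bounds form a quadratic in [s] with leading
    coefficient [K (d - 1)], minimised at [sigma2]; the hypothesis on
    [lambda_1] says exactly that [sigma2 <= lambda_1(S_k)] for every [k].
    The Rayleigh bound and [tr S = sum_i lambda_i(S)] come from the spectral
    theorem applied to [S] viewed as a complex Hermitian matrix. *)

Lemma char_poly_conj (R : comUnitRingType) n (P A : 'M[R]_n) : P \in unitmx ->
  char_poly (invmx P *m A *m P) = char_poly A.
Proof.
move=> P_unit; rewrite /char_poly /char_poly_mx.
set f := map_mx (@polyC R).
have X_conj : ('X%:M : 'M[{poly R}]_n) = f (invmx P) *m 'X%:M *m f P.
  by rewrite scalar_mxC -mulmxA -map_mxM mulVmx // map_mx1 mulmx1.
rewrite [in LHS]X_conj /f !map_mxM -mulmxBl -mulmxBr !det_mulmx mulrC mulrA.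
by rewrite -det_mulmx -map_mxM mulmxV // map_mx1 det1 mul1r.
Qed.

Section SymmetricSpectral.
Variable R : rcfType.
Local Notation toC := (real_complex R).
Local Open Scope sesquilinear_scope.

Lemma quad_form_unitary_diag n (P : 'M[R[i]]_n) (D : 'rV_n) (z : 'cV_n) :
  P \is unitarymx ->
  (z^t* *m (invmx P *m diag_mx D *m P) *m z) 0 0 =
    \sum_i D 0 i * `|(P *m z) i 0| ^+ 2.
Proof.
move=> P_unitary; rewrite invmx_unitary //.
have -> : z^t* *m (P^t* *m diag_mx D *m P) *m z =
          (P *m z)^t* *m diag_mx D *m (P *m z).
  by rewrite trmx_mul map_mxM !mulmxA.
rewrite mul_mx_diag mxE; apply: eq_bigr => i _.
by rewrite !mxE normCK; ring.
Qed.

Lemma sqnorm_unitary n (P : 'M[R[i]]_n) (z : 'cV_n) :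
  P \is unitarymx -> (z^t* *m z) 0 0 = \sum_i `|(P *m z) i 0| ^+ 2.
Proof.
move=> P_unitary; have := quad_form_unitary_diag (const_mx 1) z P_unitary.
rewrite diag_const_mx mulmx1 mulVmx ?unitarymx_unit // mulmx1 => ->.
by apply: eq_bigr => i _; rewrite mxE mul1r.
Qed.

Lemma real_complex_real (a : R) : toC a \is Num.real.
Proof. by apply/complex_realP; exists a. Qed.

Definition sym_eigval n (A : 'M[R]_n) : 'rV[R]_n :=
  map_mx (@complex.Re R) (spectral_diag (map_mx toC A)).

Variables (n : nat) (A : 'M[R]_n).
Hypothesis A_sym : A^T = A.
Local Notation AC := (map_mx toC A).
Local Notation P := (spectralmx AC).
Local Notation r := (sym_eigval A).

Lemma map_sym_hermsym : AC \is hermsymmx.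
Proof.
apply: realsym_hermsym; last first.
  by apply/mxOverP => i j; rewrite mxE real_complex_real.
apply/is_hermitianmxP; rewrite expr0 scale1r.
by apply/matrixP => i j; rewrite !mxE -[in LHS]A_sym mxE.
Qed.

Lemma sym_spectral_decomposition :
  AC = invmx P *m diag_mx (map_mx toC r) *m P.
Proof.
have /mxOverP D_real := hermitian_spectral_diag_real map_sym_hermsym.
have -> : map_mx toC r = spectral_diag AC.
  by apply/matrixP => i j; rewrite !mxE RRe_real.
exact/orthomx_spectralP/hermitian_normalmx/map_sym_hermsym.
Qed.

Lemma char_poly_sym : char_poly A = \prod_i ('X - (r 0 i)%:P).
Proof.
apply: (@map_poly_inj _ _ toC).
rewrite map_char_poly sym_spectral_decomposition char_poly_conj ?spectral_unit //.
rewrite char_poly_trig ?diag_mx_is_trig // rmorph_prod; apply: eq_bigr => i _.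
by rewrite !mxE eqxx mulr1n /= map_polyXsubC.
Qed.

Lemma trace_sym : \tr A = \sum_i r 0 i.
Proof.
apply: complexI; rewrite -trace_map_mx sym_spectral_decomposition mxtrace_mulC.
rewrite mulmxA mulmxV ?spectral_unit // mul1mx mxtrace_diag rmorph_sum.
by apply: eq_bigr => i _; rewrite mxE.
Qed.

Lemma quad_form_sym_le (m : R) (x : 'cV_n) : (forall i, r 0 i <= m) ->
  (x^T *m A *m x) 0 0 <= m * \sum_i x i 0 ^+ 2.
Proof.
move=> r_le; pose xC := map_mx toC x.
have xC_adj : xC^t* = xC^T.
  by apply/matrixP => i j; rewrite !mxE conj_Creal ?real_complex_real.
have quadC : toC ((x^T *m A *m x) 0 0) = (xC^t* *m AC *m xC) 0 0.
  by rewrite xC_adj map_trmx -!map_mxM [RHS]mxE.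
have normC : toC (\sum_i x i 0 ^+ 2) = (xC^t* *m xC) 0 0.
  rewrite xC_adj mxE rmorph_sum; apply: eq_bigr => i _.
  by rewrite !mxE rmorphXn expr2.
rewrite -lecR quadC rmorphM /= normC sym_spectral_decomposition.
rewrite quad_form_unitary_diag ?spectral_unitarymx //.
rewrite (sqnorm_unitary _ (spectral_unitarymx AC)) mulr_sumr.
apply: ler_sum => i _; rewrite mxE.
by apply: ler_wpM2r; [exact: exprn_ge0 | rewrite lecR].
Qed.

End SymmetricSpectral.

Section SymmetricEigenvalues.
Variable R : realType.

Lemma perm_eigs n (A : 'M[R]_n) (s : seq R) :
  char_poly A = \prod_(x <- s) ('X - x%:P) -> perm_eq (eigs A) s.
Proof.
move=> charA; rewrite /eigs perm_sort; apply: perm_trans (perm_count_undup s).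
have -> : [seq nseq (mup x (char_poly A)) x | x <- rootsR (char_poly A)] =
          [seq nseq (count_mem x s) x | x <- rootsR (char_poly A)].
  by apply: eq_map => x; rewrite charA mu_prod_XsubC.
apply/perm_flatten/perm_map/uniq_perm; rewrite ?undup_uniq ?uniq_roots //.
have charA_neq0 : char_poly A != 0 by rewrite -size_poly_eq0 size_char_poly.
move=> x; rewrite -(roots_on_rootsR charA_neq0) mem_undup in_itv /= charA.
by rewrite root_prod_XsubC.
Qed.

Lemma sorted_eigs n (A : 'M[R]_n) : sorted (fun x y => y <= x) (eigs A).
Proof. by apply: sort_sorted => x y; exact: le_total. Qed.

Variables (n : nat) (A : 'M[R]_n).
Hypothesis A_sym : A^T = A.

Lemma perm_eigs_sym :
  perm_eq (eigs A) [seq sym_eigval A 0 i | i <- enum 'I_n].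
Proof. by apply: perm_eigs; rewrite char_poly_sym // big_map big_enum. Qed.

Lemma size_eigs_sym : size (eigs A) = n.
Proof. by rewrite (perm_size perm_eigs_sym) size_map size_enum_ord. Qed.

Lemma sym_eigval_le_lambda1 i : sym_eigval A 0 i <= lambda A 1.
Proof.
have : sym_eigval A 0 i \in eigs A.
  by rewrite (perm_mem perm_eigs_sym) map_f ?mem_enum.
rewrite /lambda /=; case: (eigs A) (sorted_eigs A) => //= e0 es.
move=> /(order_path_min (rev_trans le_trans))/allP es_le.
by rewrite inE => /predU1P [->|/es_le].
Qed.

Lemma quad_form_le_lambda1 (x : 'cV_n) :
  (x^T *m A *m x) 0 0 <= lambda A 1 * norm2 x.
Proof. exact/quad_form_sym_le/sym_eigval_le_lambda1. Qed.

Lemma sum_lambda_tail : \sum_(2 <= i < n.+1) lambda A i = \tr A - lambda A 1.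
Proof.
have -> : \tr A = \sum_(x <- eigs A) x.
  by rewrite trace_sym // (perm_big _ perm_eigs_sym) big_map big_enum.
rewrite /lambda; case: (eigs A) size_eigs_sym => [<-|e0 es <-] /=.
  by rewrite big_geq // big_nil subr0.
by rewrite big_cons [e0 + _]addrC addrK !big_add1 [RHS](big_nth 0).
Qed.

End SymmetricEigenvalues.

Section RankOneFit.
Variables (R : realType) (d : nat).
Implicit Types (B : 'M[R]_d) (x v : 'cV[R]_d) (a l s : R).

Lemma norm2Z a x : norm2 (a *: x) = a ^+ 2 * norm2 x.
Proof.
by rewrite /norm2 mulr_sumr; apply: eq_bigr => i _; rewrite mxE exprMn.
Qed.

Lemma quad_form_eigenvector B l x :
  B *m x = l *: x -> (x^T *m B *m x) 0 0 = l * norm2 x.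
Proof.
move=> Bx; rewrite -mulmxA Bx -scalemxAr mxE /norm2 mxE.
by congr (_ * _); apply: eq_bigr => i _; rewrite mxE expr2.
Qed.

Lemma trace_outer x : \tr (x *m x^T) = norm2 x.
Proof. by apply: eq_bigr => i _; rewrite mxE big_ord1 mxE expr2. Qed.

Lemma frob2_sub_scalar B s :
  frob2 (B - s%:M) = frob2 B - 2 * s * \tr B + d%:R * s ^+ 2.
Proof.
have row i :
    \sum_j (B - s%:M) i j ^+ 2 = \sum_j B i j ^+ 2 - 2 * s * B i i + s ^+ 2.
  rewrite (bigD1 i) //= [in RHS](bigD1 i) //= (eq_bigr (fun j => B i j ^+ 2)).
    by rewrite !mxE eqxx mulr1n; ring.
  by move=> j /negbTE ji; rewrite !mxE eq_sym ji mulr0n subr0.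
rewrite /frob2 /mxtrace (eq_bigr _ (fun i _ => row i)).
rewrite big_split sumrB /= sumr_const.
by rewrite card_ord -mulr_sumr -[s ^+ 2 *+ d]mulr_natl.
Qed.

Lemma frob2_sub_outer B x :
  frob2 (B - x *m x^T) = frob2 B - 2 * (x^T *m B *m x) 0 0 + norm2 x ^+ 2.
Proof.
have quadE : (x^T *m B *m x) 0 0 = \sum_i \sum_j x i 0 * B i j * x j 0.
  rewrite mxE exchange_big /=; apply: eq_bigr => j _; rewrite mxE mulr_suml.
  by apply: eq_bigr => i _; rewrite mxE.
have norm2E : norm2 x ^+ 2 = \sum_i \sum_j x i 0 ^+ 2 * x j 0 ^+ 2.
  by rewrite /norm2 expr2 mulr_suml; apply: eq_bigr => i _; rewrite mulr_sumr.
rewrite quadE norm2E /frob2 mulr_sumr -sumrB -big_split /=.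
apply: eq_bigr => i _; rewrite mulr_sumr -sumrB -big_split /=.
by apply: eq_bigr => j _; rewrite !mxE big_ord1 !mxE; ring.
Qed.

Lemma frob2_sub_outer_scalar B x s :
  frob2 (B - (x *m x^T + s%:M)) = frob2 B - 2 * (x^T *m B *m x) 0 0
    + norm2 x ^+ 2 - 2 * s * (\tr B - norm2 x) + d%:R * s ^+ 2.
Proof.
by rewrite opprD addrA frob2_sub_scalar frob2_sub_outer raddfB /= trace_outer.
Qed.

Definition rank1_fit_error B l s :=
  frob2 B - (l - s) ^+ 2 - 2 * s * \tr B + d%:R * s ^+ 2.

Lemma rank1_fit_error_le B l x s :
  (forall y, (y^T *m B *m y) 0 0 <= l * norm2 y) ->
  rank1_fit_error B l s <= frob2 (B - (x *m x^T + s%:M)).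
Proof.
move=> B_le; rewrite frob2_sub_outer_scalar /rank1_fit_error.
have := B_le x; have := sqr_ge0 (norm2 x - (l - s)).
set q := (_ 0 0); set n := norm2 x; nra.
Qed.

Lemma rank1_fit_error_eigenvector B l v s :
  B *m v = l *: v -> norm2 v = 1 -> s <= l ->
  frob2 (B - ((Num.sqrt (l - s) *: v) *m (Num.sqrt (l - s) *: v)^T + s%:M))
    = rank1_fit_error B l s.
Proof.
move=> Bv v_unit s_le_l; rewrite frob2_sub_outer_scalar.
rewrite (quad_form_eigenvector (l := l)); last first.
  by rewrite -scalemxAr Bv scalerA mulrC -scalerA.
rewrite norm2Z v_unit mulr1 sqr_sqrtr ?subr_ge0 // /rank1_fit_error; ring.
Qed.

Lemma sum_rank1_fit_error_min K (B : 'I_K -> 'M[R]_d) (l : 'I_K -> R) sigma s :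
  (0 < d)%N -> K%:R * (d%:R - 1) * sigma = \sum_k (\tr (B k) - l k) ->
  \sum_k rank1_fit_error (B k) (l k) sigma
    <= \sum_k rank1_fit_error (B k) (l k) s.
Proof.
move=> d_gt0 sigmaE; rewrite -subr_ge0 -sumrB.
have -> : \sum_k (rank1_fit_error (B k) (l k) s
                  - rank1_fit_error (B k) (l k) sigma)
  = \sum_k ((s - sigma) * ((d%:R - 1) * (s + sigma))
             - 2 * (s - sigma) * (\tr (B k) - l k)).
  by apply: eq_bigr => k _; rewrite /rank1_fit_error; ring.
rewrite sumrB sumr_const card_ord -mulr_sumr -sigmaE -[_ *+ K]mulr_natl.
have -> : K%:R * ((s - sigma) * ((d%:R - 1) * (s + sigma)))
   - 2 * (s - sigma) * (K%:R * (d%:R - 1) * sigma)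
   = K%:R * (d%:R - 1) * (s - sigma) ^+ 2 by ring.
by rewrite mulr_ge0 ?sqr_ge0 // mulr_ge0 // subr_ge0 ler1n.
Qed.

End RankOneFit.

Theorem lemma7 (R : realType) (d K : nat) (S : 'I_K -> 'M[R]_d)
  (v : 'I_K -> 'cV[R]_d) :
  (2 <= d)%N -> (0 < K)%N ->
  (forall k, sym_mx (S k) /\ psd (S k)) ->
  (forall j : 'I_K,
     (\sum_(k < K) \sum_(2 <= i < d.+1) lambda (S k) i) / (K%:R * (d%:R - 1))
       <= lambda (S j) 1) ->
  (forall k, S k *m v k = lambda (S k) 1 *: v k /\ norm2 (v k) = 1) ->
  let sigma2 := K%:R^-1 *
      \sum_(k < K) (\tr (S k) - lambda (S k) 1) / (d%:R - 1) in
  let xg := fun k => Num.sqrt (lambda (S k) 1 - sigma2) *: v k in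
  forall (x : 'I_K -> 'cV[R]_d) (s : R),
    gmm_obj S xg sigma2 <= gmm_obj S x s.
Proof.
move=> d_ge2 K_gt0 S_sym_psd lambda1_ge S_eig sigma2 xg x s.
have S_sym k : (S k)^T = S k := (S_sym_psd k).1.
pose W := \sum_k (\tr (S k) - lambda (S k) 1).
have K_neq0 : K%:R != 0 :> R by rewrite pnatr_eq0 -lt0n.
have d1_neq0 : d%:R - 1 != 0 :> R.
  by rewrite subr_eq0 pnatr_eq1 neq_ltn d_ge2 orbT.
have sigma2E : sigma2 = W / (K%:R * (d%:R - 1)).
  by rewrite /sigma2 -mulr_suml /W; field; rewrite d1_neq0 K_neq0.
have W_tail : \sum_k \sum_(2 <= i < d.+1) lambda (S k) i = W.
  by apply: eq_bigr => k _; rewrite sum_lambda_tail.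
have sigma2_le k : sigma2 <= lambda (S k) 1 by rewrite sigma2E -W_tail.
pose err k := rank1_fit_error (S k) (lambda (S k) 1).
rewrite /gmm_obj (eq_bigr (fun k => err k sigma2)); last first.
  by move=> k _; have [Sv v_unit] := S_eig k; rewrite rank1_fit_error_eigenvector.
apply: (le_trans (sum_rank1_fit_error_min s (ltnW d_ge2) _)).
  by rewrite sigma2E mulrC divfK // mulf_neq0.
apply: ler_sum => k _; apply: rank1_fit_error_le => y.
exact: quad_form_le_lambda1.
Qed.
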